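(* Let $L$ be even and consider spin-1 degrees of freedom on the sites $\boldsymbol r$ of the $D$-dimensional hypercubic lattice $(\mathbb{Z}/L\mathbb{Z})^D$ with periodic boundary conditions. Let $$H^{(x)}=J\sum_{\langle\boldsymbol r,\boldsymbol r'\rangle}(S^x_{\boldsymbol r}S^x_{\boldsymbol r'}+S^y_{\boldsymbol r}S^y_{\boldsymbol r'})+h\sum_{\boldsymbol r}S^z_{\boldsymbol r}+\Delta\sum_{\boldsymbol r}(S^z_{\boldsymbol r})^2,$$ with real $J,h,\Delta$, the first sum over nearest-neighbour pairs, and let $\mathcal{P}^{(x)}=\sum_{\boldsymbol r}(-1)^{r_1+\cdots+r_D}(S^+_{\boldsymbol r})^2$. Let $\ket\Omega=\ket{-\,-\cdots-}$ be the state with $S^z_{\boldsymbol r}=-1$ on every site. Then (i) $H^{(x)}\ket\Omega=(\Delta-h)L^D\ket\Omega$; (ii) $[H^{(x)},\mathcal{P}^{(x)}]\ket\Omega=2h\,\mathcal{P}^{(x)}\ket\Omega$; (iii) $[[H^{(x)},\mathcal{P}^{(x)}],\mathcal{P}^{(x)}]=0$. Consequently $H^{(x)}(\mathcal{P}^{(x)})^n\ket\Omega=\big(h(2n-L^D)+\Delta L^D\big)(\mathcal{P}^{(x)})^n\ket\Omega$ for all $n\ge0$.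
   Context: $S^x,S^y,S^z$ are the spin-1 matrices acting on a site, $S^\pm=S^x\pm iS^y$; the local basis states are labelled $+,0,-$ by their $S^z$ eigenvalue. $\boldsymbol r=(r_1,\dots,r_D)$. *)

From HB Require Import structures.
From mathcomp Require Import all_boot all_order all_algebra.
Set Implicit Arguments. Unset Strict Implicit. Unset Printing Implicit Defensive.
Import Order.TTheory GRing.Theory Num.Theory.
Local Open Scope ring_scope.

Section Spin1.
Variable C : numClosedFieldType.

(* Local basis of a spin-1 site: index 0 = '+', 1 = '0', 2 = '-' (S^z = 1, 0, -1). *)
Definition Sx : 'M[C]_3 :=
  (sqrtC 2)^-1 *: \matrix_(i < 3, j < 3)
     (((i : nat) == j.+1) || ((j : nat) == i.+1))%:R.
Definition Sy : 'M[C]_3 :=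
  (sqrtC 2 * 'i)^-1 *: \matrix_(i < 3, j < 3)
     (((j : nat) == i.+1)%:R - ((i : nat) == j.+1)%:R).
Definition Sz : 'M[C]_3 :=
  \matrix_(i < 3, j < 3) ((i == j)%:R * (1 - (i : nat)%:R)).
Definition Splus : 'M[C]_3 := Sx + 'i *: Sy.

Variables D L : nat.

Definition site := {ffun 'I_D -> 'I_L}.
Definition shift (r : site) (k : 'I_D) : site :=
  [ffun j => if j == k then ordS (r j) else r j].
Definition stagger (r : site) : C := (-1) ^+ (\sum_(k < D) (r k : nat))%N.

(* product basis configurations; states are functions config -> C and
   operators are matrix kernels config -> config -> C *)
Definition config := {ffun site -> 'I_3}.
Definition vec := config -> C.
Definition op := config -> config -> C.

Definition opid : op := fun s t => (s == t)%:R.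
Definition opmul (A B : op) : op := fun s t => \sum_(u : config) A s u * B u t.
Definition opsub (A B : op) : op := fun s t => A s t - B s t.
Definition comm (A B : op) : op := opsub (opmul A B) (opmul B A).
Definition opexp (A : op) (n : nat) : op := iter n (opmul A) opid.
Definition apply (A : op) (v : vec) : vec := fun s => \sum_(t : config) A s t * v t.

Definition onsite (r : site) (A : 'M[C]_3) : op :=
  fun s t => A (s r) (t r) * [forall r' : site, (r' != r) ==> (s r' == t r')]%:R.

Definition Hx (J h Delta : C) : op := fun s t =>
  J * (\sum_(r : site) \sum_(k < D)
         (opmul (onsite r Sx) (onsite (shift r k) Sx) s t
          + opmul (onsite r Sy) (onsite (shift r k) Sy) s t))
  + h * (\sum_(r : site) onsite r Sz s t)
  + Delta * (\sum_(r : site) onsite r (Sz *m Sz) s t).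

Definition Px : op := fun s t =>
  \sum_(r : site) stagger r * onsite r (Splus *m Splus) s t.

Definition minus_idx : 'I_3 := @Ordinal 3 2 isT.
Definition allminus : config := [ffun _ => minus_idx].
Definition Omega : vec := fun s => (s == allminus)%:R.

End Spin1.

From HB Require Import structures.
From mathcomp Require Import all_boot all_order all_algebra.
From mathcomp Require Import ring.
From Stdlib Require Import FunctionalExtensionality.
Set Implicit Arguments. Unset Strict Implicit. Unset Printing Implicit Defensive.
Import Order.TTheory GRing.Theory Num.Theory.
Local Open Scope ring_scope.

Section Commutator.
Variables (R : comPzRingType) (n : nat).
Implicit Types (A B H P : 'M[R]_n) (c : R).

(* The commutator [A,B]; locked so that rewriting does not unfold it. *)
Fact mxcomm_key : unit. Proof. by []. Qed.
Definition mxcomm A B : 'M[R]_n := locked_with mxcomm_key (A *m B - B *m A).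

Lemma mxcommE A B : mxcomm A B = A *m B - B *m A.
Proof. exact: unlock. Qed.

Lemma mxcommDl A B P : mxcomm (A + B) P = mxcomm A P + mxcomm B P.
Proof. by rewrite !mxcommE mulmxDl mulmxDr opprD addrACA. Qed.

Lemma mxcommZl c A P : mxcomm (c *: A) P = c *: mxcomm A P.
Proof. by rewrite !mxcommE -scalemxAl -scalemxAr scalerBr. Qed.

Lemma mxcommZr c A P : mxcomm A (c *: P) = c *: mxcomm A P.
Proof. by rewrite !mxcommE -scalemxAl -scalemxAr scalerBr. Qed.

Lemma mxcomm0l P : mxcomm 0 P = 0.
Proof. by rewrite !mxcommE mul0mx mulmx0 subrr. Qed.

Lemma mxcomm_suml (I : finType) (F : I -> 'M[R]_n) P :
  mxcomm (\sum_i F i) P = \sum_i mxcomm (F i) P.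
Proof.
rewrite mxcommE mulmx_suml mulmx_sumr -sumrB.
by apply: eq_bigr => i _; rewrite mxcommE.
Qed.

Lemma mxcomm_sumr (I : finType) (F : I -> 'M[R]_n) A :
  mxcomm A (\sum_i F i) = \sum_i mxcomm A (F i).
Proof.
rewrite mxcommE mulmx_suml mulmx_sumr -sumrB.
by apply: eq_bigr => i _; rewrite mxcommE.
Qed.

Lemma mxcomm2_sum (I : finType) (F : I -> 'M[R]_n) P :
  (forall i, mxcomm (mxcomm (F i) P) P = 0) ->
  mxcomm (mxcomm (\sum_i F i) P) P = 0.
Proof. by move=> F0; rewrite !mxcomm_suml big1. Qed.

Lemma mxcommMl A B P : mxcomm (A *m B) P = A *m mxcomm B P + mxcomm A P *m B.
Proof. by rewrite !mxcommE mulmxBr mulmxBl !mulmxA addrA subrK. Qed.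

Lemma ladder_eigenvector H P (v : 'cV[R]_n) (e c : R) :
  H *m v = e *: v -> mxcomm H P *m v = c *: (P *m v) ->
  mxcomm (mxcomm H P) P = 0 ->
  forall k, H *m (P ^+ k *m v) = (e + k%:R * c) *: (P ^+ k *m v).
Proof.
move=> Hv Kv KP; have KPcomm : GRing.comm (mxcomm H P) P.
  by apply/eqP; rewrite -subr_eq0 -mxcommE; apply/eqP.
have HP : H *m P = P *m H + mxcomm H P by rewrite !mxcommE addrC subrK.
elim=> [|k IH]; first by rewrite expr0 mul1mx Hv mul0r addr0.
have KPk : mxcomm H P *m P ^+ k = P ^+ k *m mxcomm H P := commrX k KPcomm.
have PPk : P ^+ k *m P = P *m P ^+ k := esym (commrX k (commr_refl P)).
rewrite exprS -mulmxE -mulmxA mulmxA HP mulmxDl -!mulmxA IH mulmxA KPk.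
rewrite -mulmxA Kv -!scalemxAr !mulmxA PPk -scalerDl.
by congr (_ *: _); rewrite -natr1 mulrDl mul1r addrA.
Qed.

End Commutator.

Section SpinOne.
Variable C : numClosedFieldType.

Definition plus_idx : 'I_3 := @Ordinal 3 0 isT.
Definition zero_idx : 'I_3 := @Ordinal 3 1 isT.

Lemma mulmx3E m n (A : 'M[C]_(m, 3)) (B : 'M[C]_(3, n)) i j :
  (A *m B) i j = A i plus_idx * B plus_idx j + A i zero_idx * B zero_idx j
                 + A i minus_idx * B minus_idx j.
Proof.
rewrite mxE !big_ord_recr big_ord0 /= [0 + _]add0r.
by congr (_ + _ + _); congr (A _ _ * B _ _); apply: val_inj.
Qed.

Lemma mxE_add m n (A B : 'M[C]_(m, n)) i j : (A + B) i j = A i j + B i j.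
Proof. by rewrite mxE. Qed.
Lemma mxE_opp m n (A : 'M[C]_(m, n)) i j : (- A) i j = - A i j.
Proof. by rewrite mxE. Qed.
Lemma mxE_scale m n c (A : 'M[C]_(m, n)) i j : (c *: A) i j = c * A i j.
Proof. by rewrite mxE. Qed.

Ltac mx3_compute :=
  apply/matrixP => - [[|[|[|?]]] ?] [[|[|[|?]]] ?] //;
  rewrite ?mxcommE ?(mulmx3E, mxE_add, mxE_opp, mxE_scale) !mxE /=;
  rewrite ?(mulr0n, mulr1n, mulr0, mul0r, mulr1, mul1r, addr0, add0r,
            subr0, sub0r, subrr, oppr0) //; try ring.

Definition raise : 'M[C]_3 := \matrix_(i, j) ((j : nat) == i.+1)%:R.
Definition lower : 'M[C]_3 := \matrix_(i, j) ((i : nat) == j.+1)%:R.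
Definition munit (a b : nat) : 'M[C]_3 :=
  \matrix_(i, j) (((i : nat) == a) && ((j : nat) == b))%:R.
Definition ket_zero : 'cV[C]_3 := \col_i ((i : nat) == 1)%:R.
Definition ket_minus : 'cV[C]_3 := \col_i ((i : nat) == 2)%:R.

Definition isqrt2 : C := (sqrtC 2)^-1.
Definition Splus2 : 'M[C]_3 := Splus C *m Splus C.

Lemma isqrt2_sq : isqrt2 * isqrt2 = 2^-1.
Proof. by rewrite /isqrt2 -expr2 exprVn sqrtCK. Qed.

Lemma i_sq : 'i * 'i = -1 :> C.
Proof. by rewrite -expr2 sqrCi. Qed.

Lemma Sx_ladder : Sx C = isqrt2 *: (raise + lower).
Proof. by rewrite /Sx; congr (_ *: _); mx3_compute. Qed.

Lemma Sy_ladder : Sy C = - ('i * isqrt2) *: (raise - lower).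
Proof.
rewrite /Sy invfM invCi; congr (_ *: _); first by rewrite /isqrt2; ring.
mx3_compute.
Qed.

Lemma Splus2_unit : Splus2 = 2 *: munit 0 2.
Proof.
have Splus_raise : Splus C = (2 * isqrt2) *: raise.
  rewrite /Splus Sx_ladder Sy_ladder scalerA; apply/matrixP => i j; rewrite !mxE.
  have -> : 'i * - ('i * isqrt2) = - ('i * 'i) * isqrt2 by ring.
  by rewrite i_sq; ring.
rewrite /Splus2 Splus_raise -scalemxAl -scalemxAr scalerA.
have -> : 2 * isqrt2 * (2 * isqrt2) = 2 * 2 * (isqrt2 * isqrt2) by ring.
rewrite isqrt2_sq -mulrA mulfV ?pnatr_eq0 // mulr1; congr (_ *: _).
mx3_compute.
Qed.

Lemma mxcomm_Sx_Splus2 :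
  mxcomm (Sx C) Splus2 = (2 * isqrt2) *: (munit 1 2 - munit 0 1).
Proof.
rewrite Sx_ladder Splus2_unit mxcommZl mxcommZr scalerA mulrC; congr (_ *: _).
mx3_compute.
Qed.

Lemma mxcomm_Sy_Splus2 : mxcomm (Sy C) Splus2 = 'i *: mxcomm (Sx C) Splus2.
Proof.
rewrite mxcomm_Sx_Splus2 Sy_ladder Splus2_unit mxcommZl mxcommZr !scalerA.
have -> : mxcomm (raise - lower) (munit 0 2) = - (munit 1 2 - munit 0 1).
  mx3_compute.
by rewrite scalerN -scaleNr; congr (_ *: _); ring.
Qed.

Lemma mxcomm2_Sx : mxcomm (mxcomm (Sx C) Splus2) Splus2 = 0.
Proof.
rewrite mxcomm_Sx_Splus2 Splus2_unit mxcommZl mxcommZr.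
have -> : mxcomm (munit 1 2 - munit 0 1) (munit 0 2) = 0 by mx3_compute.
by rewrite !scaler0.
Qed.

Lemma mxcomm2_Sy : mxcomm (mxcomm (Sy C) Splus2) Splus2 = 0.
Proof. by rewrite mxcomm_Sy_Splus2 mxcommZl mxcomm2_Sx scaler0. Qed.

Lemma mxcomm_Sz_Splus2 : mxcomm (Sz C) Splus2 = 2 *: Splus2.
Proof. rewrite Splus2_unit mxcommZr; congr (_ *: _); mx3_compute. Qed.

Lemma mxcomm_Sz2_Splus2 : mxcomm (Sz C *m Sz C) Splus2 = 0.
Proof.
rewrite Splus2_unit mxcommZr.
have -> : mxcomm (Sz C *m Sz C) (munit 0 2) = 0 by mx3_compute.
by rewrite scaler0.
Qed.

Lemma Sx_minus : Sx C *m ket_minus = isqrt2 *: ket_zero.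
Proof. rewrite Sx_ladder -scalemxAl; congr (_ *: _); mx3_compute. Qed.

Lemma Sy_minus : Sy C *m ket_minus = - ('i * isqrt2) *: ket_zero.
Proof. rewrite Sy_ladder -scalemxAl; congr (_ *: _); mx3_compute. Qed.

Lemma Sz_minus : Sz C *m ket_minus = -1 *: ket_minus.
Proof. mx3_compute. Qed.

Lemma Sz2_minus : (Sz C *m Sz C) *m ket_minus = 1 *: ket_minus.
Proof. mx3_compute. Qed.

Lemma mxcomm_Sx_Splus2_minus :
  mxcomm (Sx C) Splus2 *m ket_minus = 2 *: (Sx C *m ket_minus).
Proof.
rewrite mxcomm_Sx_Splus2 Sx_minus -scalemxAl !scalerA [2 * isqrt2]mulrC.
by congr (_ *: _); mx3_compute.
Qed.

Lemma mxcomm_Sy_Splus2_minus :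
  mxcomm (Sy C) Splus2 *m ket_minus = -2 *: (Sy C *m ket_minus).
Proof.
rewrite mxcomm_Sy_Splus2 mxcomm_Sx_Splus2 Sy_minus -!scalemxAl !scalerA.
have -> : (munit 1 2 - munit 0 1) *m ket_minus = ket_zero by mx3_compute.
by congr (_ *: _); ring.
Qed.

(* The amplitudes of S^x|-> and S^y|-> on |0> have vanishing square sum:
   this is why the XY coupling annihilates the all-minus state. *)
Lemma xy_amplitudes_cancel :
  isqrt2 * isqrt2 + (- ('i * isqrt2)) * (- ('i * isqrt2)) = 0.
Proof.
have -> : - ('i * isqrt2) * - ('i * isqrt2) = ('i * 'i) * (isqrt2 * isqrt2) by ring.
by rewrite i_sq; ring.
Qed.

End SpinOne.

Section KernelMatrices.
Variables (C : numClosedFieldType) (D L : nat).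
Local Notation site := (site D L).
Local Notation config := (config D L).
Local Notation op := (op C D L).
Local Notation vec := (vec C D L).
Local Notation N := #|config|.

Definition cfg_of (i : 'I_N) : config := enum_val i.
Definition mxof (A : op) : 'M[C]_N := \matrix_(i, j) A (cfg_of i) (cfg_of j).
Definition colof (v : vec) : 'cV[C]_N := \col_i v (cfg_of i).

Lemma sum_config (F : config -> C) :
  \sum_(u : config) F u = \sum_(k < N) F (cfg_of k).
Proof. by rewrite (big_enum_val (A := config)). Qed.

Lemma mxof_mul A B : mxof (opmul A B) = mxof A *m mxof B.
Proof.
apply/matrixP => i j; rewrite !mxE /opmul sum_config.
by apply: eq_bigr => k _; rewrite !mxE.
Qed.

Lemma mxof_apply A v : mxof A *m colof v = colof (apply A v).
Proof.
apply/matrixP => i j; rewrite !mxE /apply sum_config.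
by apply: eq_bigr => k _; rewrite !mxE.
Qed.

Lemma mxof_comm A B : mxof (comm A B) = mxcomm (mxof A) (mxof B).
Proof.
by rewrite !mxcommE -!mxof_mul; apply/matrixP => i j; rewrite !mxE.
Qed.

Lemma mxof_opexp A k : mxof (opexp A k) = mxof A ^+ k.
Proof.
elim: k => [|k IH].
  apply/matrixP => i j; rewrite !mxE /opexp /opid /cfg_of /=.
  by rewrite (inj_eq enum_val_inj).
by rewrite exprS /opexp iterS mxof_mul -[iter _ _ _]/(opexp A k) IH.
Qed.

Lemma mxof0 : mxof (fun _ _ => 0) = 0.
Proof. by apply/matrixP => i j; rewrite !mxE. Qed.

Lemma mxof_inj A B : mxof A = mxof B -> A = B.
Proof.
move=> /matrixP eqAB; apply: functional_extensionality => s.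
apply: functional_extensionality => t.
by have := eqAB (enum_rank s) (enum_rank t); rewrite !mxE /cfg_of !enum_rankK.
Qed.

Lemma colof_inj v w : colof v = colof w -> v = w.
Proof.
move=> /matrixP eqvw; apply: functional_extensionality => s.
by have := eqvw (enum_rank s) 0; rewrite !mxE /cfg_of enum_rankK.
Qed.

Lemma colofZ c v : colof (fun s => c * v s) = c *: colof v.
Proof. by apply/matrixP => i j; rewrite !mxE. Qed.

Definition agree (r : site) (s u : config) :=
  [forall r' : site, (r' != r) ==> (s r' == u r')].
Definition agree2 (r r' : site) (s u : config) :=
  [forall q : site, (q != r) && (q != r') ==> (s q == u q)].
Definition upd (s : config) (r : site) (x : 'I_3) : config :=
  [ffun q => if q == r then x else s q].

Lemma upd_at s r x : upd s r x r = x.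
Proof. by rewrite ffunE eqxx. Qed.

Lemma upd_off s r x q : q != r -> upd s r x q = s q.
Proof. by rewrite ffunE => /negbTE ->. Qed.

Lemma sum_delta (T : finType) (a : T) (F : T -> C) :
  \sum_u F u * (u == a)%:R = F a.
Proof.
rewrite (bigD1 a) //= eqxx mulr1 big1 ?addr0 // => u /negbTE ->.
by rewrite mulr0.
Qed.

Lemma upd_eq s r x u : (u == upd s r x) = agree r s u && (x == u r).
Proof.
apply/eqP/andP => [->|[/forallP agr /eqP ->]].
  split; last by rewrite upd_at.
  by apply/forallP => q; apply/implyP => qr; rewrite upd_off.
apply/ffunP => q; rewrite ffunE; case: eqP => [->//|/eqP qr].
by apply/esym/eqP; move/implyP: (agr q); apply.
Qed.

Lemma sum_agree r s (F : config -> C) :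
  \sum_(u : config) F u * (agree r s u)%:R = \sum_(x < 3) F (upd s r x).
Proof.
under [RHS]eq_bigr => x _ do rewrite -(sum_delta (upd s r x) F).
rewrite exchange_big; apply: eq_bigr => u _.
under eq_bigr do rewrite upd_eq -mulnb natrM mulrA.
rewrite -big_distrr /= (eq_bigr (fun x => 1 * (x == u r)%:R)) ?sum_delta ?mulr1 //.
by move=> x _; rewrite mul1r.
Qed.

Lemma agree_upd r s x t : agree r (upd s r x) t = agree r s t.
Proof.
apply: eq_forallb => q; case: (eqVneq q r) => [->|qr] //=.
by rewrite upd_off.
Qed.

Lemma agree_upd2 r r' s x t : r != r' ->
  agree r' (upd s r x) t = (x == t r) && agree2 r r' s t.
Proof.
move=> rr'; apply/forallP/andP => [agr|[/eqP tr /forallP agr2] q].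
  split; first by have := agr r; rewrite rr' upd_at.
  apply/forallP => q; apply/implyP => /andP [qr qr'].
  by have := agr q; rewrite qr' upd_off.
apply/implyP => qr'; case: (eqVneq q r) => [->|qr]; first by rewrite upd_at tr.
by rewrite upd_off //; have := agr2 q; rewrite qr qr'.
Qed.

Lemma onsite_mul (r : site) (A B : 'M[C]_3) :
  opmul (onsite r A) (onsite r B) = onsite r (A *m B).
Proof.
apply: functional_extensionality => s; apply: functional_extensionality => t.
rewrite /opmul /onsite -/(agree r s _).
transitivity (\sum_(u : config)
   (A (s r) (u r) * B (u r) (t r) * (agree r u t)%:R) * (agree r s u)%:R).
  by apply: eq_bigr => u _; rewrite /agree; ring.
rewrite sum_agree; under eq_bigr do rewrite upd_at agree_upd.
by rewrite -big_distrl /= mxE /agree.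
Qed.

Lemma onsite_mul_neq (r r' : site) (A B : 'M[C]_3) s t : r != r' ->
  opmul (onsite r A) (onsite r' B) s t
  = A (s r) (t r) * B (s r') (t r') * (agree2 r r' s t)%:R.
Proof.
move=> rr'; rewrite /opmul /onsite -/(agree r s _).
transitivity (\sum_(u : config)
   (A (s r) (u r) * B (u r') (t r') * (agree r' u t)%:R) * (agree r s u)%:R).
  by apply: eq_bigr => u _; rewrite /agree; ring.
rewrite sum_agree.
under eq_bigr do rewrite upd_at upd_off 1?eq_sym // agree_upd2 // -mulnb natrM mulrA.
by rewrite -big_distrl /= (sum_delta (t r) (fun x => A (s r) x * B (s r') (t r'))).
Qed.

Lemma onsite_comm (r r' : site) (A B : 'M[C]_3) : r != r' ->
  opmul (onsite r A) (onsite r' B) = opmul (onsite r' B) (onsite r A).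
Proof.
move=> rr'; apply: functional_extensionality => s.
apply: functional_extensionality => t.
rewrite onsite_mul_neq // onsite_mul_neq 1?eq_sym // [_ * B _ _]mulrC.
have agree2C : agree2 r' r s t = agree2 r r' s t.
  by apply: eq_forallb => q; rewrite andbC.
by rewrite agree2C.
Qed.

End KernelMatrices.

Section LatticeParity.
Variables (C : numClosedFieldType) (D L : nat).
Local Notation site := (site D L).

Lemma odd_ordS (i : 'I_L) : ~~ odd L -> odd (ordS i) = ~~ odd i.
Proof.
move=> evenL; rewrite /=; have [lt|ge] := ltnP i.+1 L; first by rewrite modn_small.
have iL : i.+1 = L by apply/eqP; rewrite eqn_leq ltn_ord ge.
have oddi : odd i by rewrite -[odd i]negbK -[~~ odd i]/(odd i.+1) iL.
by rewrite iL modnn oddi.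
Qed.

Lemma shift_neq (r : site) k : ~~ odd L -> shift r k != r.
Proof.
move=> evenL; apply/eqP => /ffunP /(_ k); rewrite ffunE eqxx => rk.
by have := odd_ordS (r k) evenL; rewrite rk; case: (odd _).
Qed.

Lemma stagger_shift (r : site) k : ~~ odd L ->
  stagger C (shift r k) = - stagger C r.
Proof.
move=> evenL; rewrite /stagger (bigD1 k) //= [in RHS](bigD1 k) //= ffunE eqxx.
have -> : (\sum_(i < D | i != k) shift r k i = \sum_(i < D | i != k) r i)%N.
  by apply: eq_bigr => i ik; rewrite ffunE (negbTE ik).
rewrite -signr_odd -[in RHS]signr_odd !oddD odd_ordS //.
by case: (odd (r k)); case: (odd _); rewrite /= ?expr0 ?expr1 ?opprK.
Qed.

Lemma card_site : #|site| = (L ^ D)%N.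
Proof. by rewrite card_ffun !card_ord. Qed.

End LatticeParity.

Section Operators.
Variables (C : numClosedFieldType) (D L : nat).
Local Notation site := (site D L).
Local Notation config := (config D L).
Local Notation N := #|config|.

Definition siteop (r : site) (X : 'M[C]_3) : 'M[C]_N := mxof (onsite r X).

Lemma siteopZ r c X : siteop r (c *: X) = c *: siteop r X.
Proof. by apply/matrixP => i j; rewrite !mxE /onsite !mxE mulrA. Qed.

Lemma siteop0 r : siteop r 0 = 0.
Proof. by apply/matrixP => i j; rewrite !mxE /onsite !mxE mul0r. Qed.

Lemma siteop_mxcomm r X Y : mxcomm (siteop r X) (siteop r Y) = siteop r (mxcomm X Y).
Proof.
rewrite !mxcommE /siteop -!mxof_mul !onsite_mul.
by apply/matrixP => i j; rewrite !mxE /onsite !mxE mulrBl.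
Qed.

Lemma siteop_mxcomm_neq r r' X Y : r != r' -> mxcomm (siteop r X) (siteop r' Y) = 0.
Proof. by move=> rr'; rewrite !mxcommE /siteop -!mxof_mul onsite_comm // subrr. Qed.

Definition Pmx : 'M[C]_N := \sum_(r : site) stagger C r *: siteop r (Splus2 C).

Definition bondmx (r : site) (k : 'I_D) : 'M[C]_N :=
  siteop r (Sx C) *m siteop (shift r k) (Sx C)
  + siteop r (Sy C) *m siteop (shift r k) (Sy C).

Definition Hmx (J h Delta : C) : 'M[C]_N :=
  J *: (\sum_(r : site) \sum_(k < D) bondmx r k)
  + h *: (\sum_(r : site) siteop r (Sz C))
  + Delta *: (\sum_(r : site) siteop r (Sz C *m Sz C)).

Lemma mxof_Px : mxof (@Px C D L) = Pmx.
Proof.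
apply/matrixP => i j; rewrite /Pmx summxE !mxE /Px.
by apply: eq_bigr => r _; rewrite !mxE.
Qed.

Lemma mxof_Hx J h Delta : mxof (@Hx C D L J h Delta) = Hmx J h Delta.
Proof.
apply/matrixP => i j; rewrite /Hmx !mxE /Hx !summxE.
congr (_ * _ + _ * _ + _ * _); apply: eq_bigr => r _; rewrite ?mxE //.
by rewrite summxE; apply: eq_bigr => k _; rewrite /bondmx /siteop -!mxof_mul !mxE.
Qed.

(* Only the term of P at site a fails to commute with an operator at a. *)
Lemma mxcomm_siteop_Pmx a X :
  mxcomm (siteop a X) Pmx = stagger C a *: siteop a (mxcomm X (Splus2 C)).
Proof.
rewrite /Pmx mxcomm_sumr (bigD1 a) //= big1 ?addr0.
  by rewrite mxcommZr siteop_mxcomm.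
by move=> r ra; rewrite mxcommZr siteop_mxcomm_neq 1?eq_sym // scaler0.
Qed.

Lemma mxcomm2_siteop a X : mxcomm (mxcomm X (Splus2 C)) (Splus2 C) = 0 ->
  mxcomm (mxcomm (siteop a X) Pmx) Pmx = 0.
Proof.
move=> X0; rewrite mxcomm_siteop_Pmx mxcommZl mxcomm_siteop_Pmx X0.
by rewrite siteop0 !scaler0.
Qed.

Lemma mxcomm2_pair r b X : mxcomm (mxcomm X (Splus2 C)) (Splus2 C) = 0 ->
  mxcomm (mxcomm (siteop r X *m siteop b X) Pmx) Pmx
  = (2 * (stagger C r * stagger C b)) *:
      (siteop r (mxcomm X (Splus2 C)) *m siteop b (mxcomm X (Splus2 C))).
Proof.
move=> X0; rewrite mxcommMl !mxcomm_siteop_Pmx mxcommDl !mxcommMl !mxcommZl.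
rewrite !mxcomm_siteop_Pmx !X0 !siteop0 !scaler0 mulmx0 mul0mx add0r addr0.
rewrite -!scalemxAl -!scalemxAr !scalerA -scalerDl; congr (_ *: _); ring.
Qed.

(* (iii) at the matrix level: the single-site terms have vanishing double
   commutators, and the S^y-part of each bond cancels the S^x-part since
   [S^y,(S^+)^2] = i [S^x,(S^+)^2]. *)
Lemma mxcomm2_Hmx J h Delta : mxcomm (mxcomm (Hmx J h Delta) Pmx) Pmx = 0.
Proof.
have Sz0 : mxcomm (mxcomm (Sz C) (Splus2 C)) (Splus2 C) = 0.
  by rewrite mxcomm_Sz_Splus2 mxcommZl mxcommE subrr scaler0.
have Sz20 : mxcomm (mxcomm (Sz C *m Sz C) (Splus2 C)) (Splus2 C) = 0.
  by rewrite mxcomm_Sz2_Splus2 mxcomm0l.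
rewrite /Hmx !mxcommDl !mxcommZl.
rewrite !(mxcomm2_sum (fun r => mxcomm2_siteop r Sz0)).
rewrite !(mxcomm2_sum (fun r => mxcomm2_siteop r Sz20)) !scaler0 !addr0.
rewrite mxcomm2_sum ?scaler0 // => r; apply: mxcomm2_sum => k.
rewrite /bondmx !mxcommDl !mxcomm2_pair ?mxcomm2_Sx ?mxcomm2_Sy //.
rewrite mxcomm_Sy_Splus2 !siteopZ -scalemxAl -scalemxAr !scalerA -mulrA i_sq.
by rewrite mulrN1 scaleNr addrN.
Qed.

End Operators.

Section ProductStates.
Variables (C : numClosedFieldType) (D L : nat).
Local Notation site := (site D L).
Local Notation config := (config D L).
Local Notation N := #|config|.

Definition ket (f : site -> 'cV[C]_3) : 'cV[C]_N :=
  colof (fun s : config => \prod_r f r (s r) 0).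

Definition setsite (f : site -> 'cV[C]_3) (a : site) (g : 'cV[C]_3) :=
  fun r => if r == a then g else f r.

Lemma setsite_id f a : setsite f a (f a) = f.
Proof.
by apply: functional_extensionality => r; rewrite /setsite; case: eqP => [->|].
Qed.

Lemma setsiteC f a b g g' : a != b ->
  setsite (setsite f a g) b g' = setsite (setsite f b g') a g.
Proof.
move=> ab; apply: functional_extensionality => r; rewrite /setsite.
by case: (eqVneq r b) => [->|//]; rewrite eq_sym (negbTE ab).
Qed.

Lemma ket_setsiteZ f a c g : ket (setsite f a (c *: g)) = c *: ket (setsite f a g).
Proof.
rewrite -colofZ; congr colof; apply: functional_extensionality => s.
rewrite (bigD1 a) //= [in RHS](bigD1 a) //= /setsite eqxx mxE mulrA.
by congr (_ * _); apply: eq_bigr => r ra; rewrite (negbTE ra).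
Qed.

Lemma siteop_ket a X f : siteop a X *m ket f = ket (setsite f a (X *m f a)).
Proof.
rewrite /siteop /ket mxof_apply; congr colof; apply: functional_extensionality => s.
rewrite /apply /onsite -/(agree a s _).
transitivity (\sum_(t : config) (X (s a) (t a) * \prod_r f r (t r) 0) * (agree a s t)%:R).
  by apply: eq_bigr => t _; rewrite /agree; ring.
rewrite sum_agree [in RHS](bigD1 a) //= /setsite eqxx mxE big_distrl /=.
apply: eq_bigr => x _; rewrite (bigD1 a) //= upd_at mulrA; congr (_ * _).
by apply: eq_bigr => r ra; rewrite upd_off // (negbTE ra).
Qed.

Definition ket_Omega : 'cV[C]_N := colof (@Omega C D L).

Lemma ket_Omega_prod : ket_Omega = ket (fun _ => ket_minus C).
Proof.
congr colof; apply: functional_extensionality => s; rewrite /Omega.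
have [->|s_minus] := eqVneq s (allminus D L).
  by rewrite big1 // => r _; rewrite !ffunE mxE.
have [r sr] : exists r, s r != minus_idx.
  apply/existsP; apply: contraR s_minus; rewrite negb_exists => /forallP sm.
  by apply/eqP/ffunP => r; rewrite ffunE; apply/eqP; have := sm r; rewrite negbK.
rewrite (bigD1 r) //= mxE.
have -> : ((s r : nat) == 2)%N = false by apply/negbTE.
by rewrite mul0r.
Qed.

Lemma siteop_Omega a X c : X *m ket_minus C = c *: ket_minus C ->
  siteop a X *m ket_Omega = c *: ket_Omega.
Proof.
by move=> Xm; rewrite ket_Omega_prod siteop_ket Xm ket_setsiteZ setsite_id.
Qed.

Definition twosite_ket (r : site) u (b : site) v : 'cV[C]_N :=
  ket (setsite (setsite (fun _ => ket_minus C) b v) r u).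

Lemma siteop2_Omega r b X Y c d u v : r != b ->
  X *m ket_minus C = c *: u -> Y *m ket_minus C = d *: v ->
  siteop r X *m (siteop b Y *m ket_Omega) = (c * d) *: twosite_ket r u b v.
Proof.
move=> rb Xm Ym; rewrite ket_Omega_prod !siteop_ket.
have -> : setsite (fun _ => ket_minus C) b (Y *m ket_minus C) r = ket_minus C.
  by rewrite /setsite (negbTE rb).
rewrite Xm Ym ket_setsiteZ setsiteC 1?eq_sym // ket_setsiteZ setsiteC //.
by rewrite scalerA mulrC.
Qed.

End ProductStates.

Section OmegaEigen.
Variables (C : numClosedFieldType) (D L : nat).
Hypothesis evenL : ~~ odd L.
Local Notation site := (site D L).
Local Notation ket_Omega := (@ket_Omega C D L).
Local Notation Pmx := (@Pmx C D L).

(* Each XY bond annihilates Omega: it only creates |0 0> pairs, with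
   amplitude isqrt2^2 + (-i isqrt2)^2 = 0. *)
Lemma bondmx_Omega (r : site) k : bondmx C r k *m ket_Omega = 0.
Proof.
have rb : r != shift r k by rewrite eq_sym shift_neq.
rewrite /bondmx mulmxDl -!mulmxA (siteop2_Omega rb (Sx_minus C) (Sx_minus C)).
rewrite (siteop2_Omega rb (Sy_minus C) (Sy_minus C)) -scalerDl.
by rewrite xy_amplitudes_cancel scale0r.
Qed.

Lemma Hmx_Omega J h Delta :
  Hmx D L J h Delta *m ket_Omega = ((Delta - h) * (L ^ D)%:R) *: ket_Omega.
Proof.
rewrite /Hmx !mulmxDl -!scalemxAl !mulmx_suml.
rewrite big1 ?scaler0 ?add0r; last first.
  by move=> r _; rewrite mulmx_suml big1 // => k _; apply: bondmx_Omega.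
under eq_bigr do rewrite (siteop_Omega _ (Sz_minus C)).
under [X in _ + Delta *: X]eq_bigr do rewrite (siteop_Omega _ (Sz2_minus C)).
rewrite !sumr_const card_site -!scaler_nat !scalerA -scalerDl.
by congr (_ *: _); ring.
Qed.

(* The two Leibniz terms of [X_r X_b, P] cancel on Omega when r and b carry
   opposite staggering signs and [X,(S^+)^2]|-> is proportional to X|->. *)
Lemma mxcomm_pair_Omega (r b : site) X c : r != b ->
  stagger C b = - stagger C r ->
  mxcomm X (Splus2 C) *m ket_minus C = c *: (X *m ket_minus C) ->
  mxcomm (siteop r X *m siteop b X) Pmx *m ket_Omega = 0.
Proof.
move=> rb sign_rb Wm; have Xm : X *m ket_minus C = 1 *: (X *m ket_minus C).
  by rewrite scale1r.
rewrite mxcommMl !mxcomm_siteop_Pmx mulmxDl -!mulmxA -!scalemxAl -scalemxAr.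
rewrite (siteop2_Omega rb Xm Wm) (siteop2_Omega rb Wm Xm) !scalerA -scalerDl.
by rewrite sign_rb mul1r mulr1 mulNr addNr scale0r.
Qed.

Lemma mxcomm_Hmx_Pmx_Omega J h Delta :
  mxcomm (Hmx D L J h Delta) Pmx *m ket_Omega = (2 * h) *: (Pmx *m ket_Omega).
Proof.
rewrite /Hmx !mxcommDl !mxcommZl !mxcomm_suml.
have -> : \sum_(r : site) mxcomm (siteop r (Sz C)) Pmx = 2 *: Pmx.
  rewrite /Pmx scaler_sumr; apply: eq_bigr => r _.
  by rewrite mxcomm_siteop_Pmx mxcomm_Sz_Splus2 siteopZ !scalerA mulrC.
have -> : \sum_(r : site) mxcomm (siteop r (Sz C *m Sz C)) Pmx = 0.
  by apply: big1 => r _; rewrite mxcomm_siteop_Pmx mxcomm_Sz2_Splus2 siteop0 scaler0.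
rewrite scaler0 addr0 mulmxDl -!scalemxAl scalerA [h * 2]mulrC.
rewrite mulmx_suml big1 ?scaler0 ?add0r // => r _.
rewrite mxcomm_suml mulmx_suml big1 // => k _.
have rb : r != shift r k by rewrite eq_sym shift_neq.
rewrite /bondmx mxcommDl mulmxDl.
rewrite (mxcomm_pair_Omega rb (stagger_shift C r k evenL) (mxcomm_Sx_Splus2_minus C)).
by rewrite (mxcomm_pair_Omega rb (stagger_shift C r k evenL) (mxcomm_Sy_Splus2_minus C)) addr0.
Qed.

End OmegaEigen.

(* (i)-(iii) are the matrix statements above, transported back to kernels;
   the tower of eigenstates follows from the ladder lemma. *)
Theorem mainTheorem7 (C : numClosedFieldType) (D L : nat) (J h Delta : C)
  (HL : ~~ odd L) (HJ : J \is Num.real) (Hh : h \is Num.real)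
  (HDelta : Delta \is Num.real) :
  let H := @Hx C D L J h Delta in
  let P := @Px C D L in
  let Om := @Omega C D L in
  [/\ apply H Om = (fun s => ((Delta - h) * (L ^ D)%:R) * Om s),
      apply (comm H P) Om = (fun s => (2 * h) * apply P Om s),
      comm (comm H P) P = (fun _ _ => 0)
    & forall n : nat,
      apply H (apply (opexp P n) Om)
      = (fun s => (h * ((2 * n)%:R - (L ^ D)%:R) + Delta * (L ^ D)%:R)
                  * apply (opexp P n) Om s)].
Proof.
move=> H P Om; rewrite /H /P /Om.
have eigen := @Hmx_Omega C D L HL J h Delta.
have raising := @mxcomm_Hmx_Pmx_Omega C D L HL J h Delta.
have nested := @mxcomm2_Hmx C D L J h Delta.
split.
- by apply: colof_inj; rewrite -mxof_apply mxof_Hx colofZ.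
- apply: colof_inj; rewrite -mxof_apply mxof_comm mxof_Hx mxof_Px colofZ.
  by rewrite -mxof_apply mxof_Px.
- by apply: mxof_inj; rewrite mxof0 !mxof_comm mxof_Hx mxof_Px.
- move=> n; apply: colof_inj; rewrite colofZ -!mxof_apply mxof_Hx mxof_opexp mxof_Px.
  rewrite (ladder_eigenvector eigen raising nested); congr (_ *: _).
  by rewrite natrM; ring.
Qed.
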